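(* Let $H$ be the disjoint union (with no edges between them) of cliques $KH_1,KH_2,\ldots,KH_s$ of sizes $y_1\ge y_2\ge\cdots\ge y_s\ge 1$. Then $$\rho(H)=\sum_{i=1}^s i\,y_i.$$
   Context: All graphs are finite and simple. A coloring means a proper vertex coloring; an induced subgraph is rainbow if all its vertices have pairwise different colors. For a graph $H$, $\rho(H)$ is the least number $m$ such that there exists a graph $G$ on $m$ vertices such that every proper vertex coloring of $G$ contains a rainbow induced subgraph isomorphic to $H$. *)

From mathcomp Require Import all_boot all_order.
Set Implicit Arguments. Unset Strict Implicit. Unset Printing Implicit Defensive.

Definition simple_graph (V : finType) (e : rel V) : Prop :=
  symmetric e /\ irreflexive e.

(* A proper vertex coloring (colors taken in nat; for a finite graph this
   loses no generality). *)
Definition proper_coloring (V : finType) (e : rel V) (c : V -> nat) : Prop :=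
  forall x y, e x y -> c x <> c y.

Definition induced_embedding (W V : finType) (eH : rel W) (eG : rel V)
  (f : W -> V) : Prop :=
  injective f /\ forall u v, eG (f u) (f v) = eH u v.

Definition rainbow_forcing (W V : finType) (eH : rel W) (eG : rel V) : Prop :=
  forall c : V -> nat, proper_coloring eG c ->
    exists f : W -> V, induced_embedding eH eG f /\ injective (fun w => c (f w)).

Definition rho_admissible (W : finType) (eH : rel W) (m : nat) : Prop :=
  exists eG : rel 'I_m, simple_graph eG /\ rainbow_forcing eH eG.

Definition is_rho (W : finType) (eH : rel W) (m : nat) : Prop :=
  rho_admissible eH m /\ forall k, rho_admissible eH k -> m <= k.

(* Disjoint union of cliques of sizes y 0, ..., y (s-1):
   vertex (i, j) with j < y i; two vertices adjacent iff distinct and in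
   the same clique. *)
Definition cliques_vertex (s : nat) (y : 'I_s -> nat) : finType :=
  {i : 'I_s & 'I_(y i)}.

Definition cliques_rel (s : nat) (y : 'I_s -> nat) : rel (cliques_vertex y) :=
  fun u v => (tag u == tag v) && (u != v).
Arguments cliques_vertex : clear implicits.
Arguments cliques_rel : clear implicits.

From mathcomp Require Import all_boot all_order.
From mathcomp Require Import zify.
Set Implicit Arguments. Unset Strict Implicit. Unset Printing Implicit Defensive.

(* Upper bound: let G be the disjoint union of cliques of sizes
   Y_j = y_j + y_(j+1) + ... + y_s, which has sum_i i y_i vertices.  Given a
   proper coloring of G, choose for j = s, s-1, ..., 1 a set of y_j vertices of
   the j-th clique avoiding the y_(j+1) + ... + y_s colors chosen so far; the
   j-th clique has Y_j distinct colors, so this is possible, and the chosen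
   sets span a rainbow induced copy of H.

   Lower bound: if G forces a rainbow induced H, color G greedily, each color
   class being a maximum independent set among the vertices not yet colored,
   so that the class of color t is at least as large as any independent set
   with all colors >= t.  In a rainbow induced copy of H let m_j be the largest
   color on the j-th clique.  For a vertex w of the copy, the vertices of
   largest color of the cliques j with c(w) <= m_j form such an independent
   set, hence
     |G| >= sum_w |class of c(w)| >= sum_w #{j | c(w) <= m_j}
         >= sum_(i,j) y_i [m_i <= m_j] >= sum_i i y_i,
   the last step because for i < j at least one of [m_i <= m_j], [m_j <= m_i]
   holds and y_j <= y_i. *)

Lemma sum_ord_leq (s : nat) (i : 'I_s) : \sum_(j < s) (j <= i) = i.+1.
Proof.
rewrite -(big_mkord xpredT (fun j => (j <= i : nat))).
rewrite (big_cat_nat _ (n := i.+1)) //=.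
rewrite big_nat_cond (eq_bigr (fun _ => 1)); last first.
  by move=> j /andP[/andP[_ ji] _]; rewrite -ltnS ji.
rewrite -big_nat_cond sum_nat_const_nat subn0 muln1.
by rewrite big_nat_cond big1 ?addn0 // => j /andP[/andP[ij _] _]; rewrite leqNgt ij.
Qed.

Lemma card_set_sum (T : finType) (P : pred T) : #|[set x | P x]| = \sum_x P x.
Proof. by rewrite -sum1dep_card big_mkcond; apply: eq_bigr => x _; case: (P x). Qed.

Lemma sum_cliques_vertex_tag (s : nat) (y : 'I_s -> nat) (F : 'I_s -> nat) :
  \sum_(w : cliques_vertex s y) F (tag w) = \sum_(i < s) y i * F i.
Proof.
rewrite -(@sig_big_dep _ _ _ _ (fun i => 'I_(y i)) xpredT (fun=> xpredT)
  (fun i _ => F i)).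
by apply: eq_bigr => i _; rewrite sum_nat_const card_ord.
Qed.

Lemma card_cliques_vertex (s : nat) (y : 'I_s -> nat) :
  #|cliques_vertex s y| = \sum_(i < s) y i.
Proof.
rewrite -sum1_card (sum_cliques_vertex_tag y (fun => 1)).
by apply: eq_bigr => i _; rewrite muln1.
Qed.

Lemma cliques_rel_simple (s : nat) (y : 'I_s -> nat) :
  simple_graph (cliques_rel s y).
Proof.
split; first by move=> u v; rewrite /cliques_rel eq_sym [v == u]eq_sym.
by move=> u; rewrite /cliques_rel !eqxx.
Qed.

Lemma rho_admissible_card (W V : finType) (eH : rel W) (eG : rel V) :
  simple_graph eG -> rainbow_forcing eH eG -> rho_admissible eH #|V|.
Proof.
move=> [eG_sym eG_irr] forcing.
exists (fun a b : 'I_#|V| => eG (enum_val a) (enum_val b)); split.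
  by split=> [a b|a]; [apply: eG_sym | apply: eG_irr].
move=> c c_proper.
have [|f [[f_inj f_ind] cf_inj]] := forcing (fun v => c (enum_rank v)).
  by move=> u v uv; apply: c_proper; rewrite !enum_rankK.
exists (fun w => enum_rank (f w)); split=> //; split.
  by move=> u v /enum_rank_inj /f_inj.
by move=> u v; rewrite !enum_rankK.
Qed.

Section GreedyColoring.

Variables (V : finType) (e : rel V).
Hypothesis e_irr : irreflexive e.

Definition independent (I : {set V}) := [forall x in I, forall y in I, ~~ e x y].

Lemma independent1 (a : V) : independent [set a].
Proof.
by apply/forallP=> x; apply/implyP=> /set1P ->; apply/forallP=> z;
  apply/implyP=> /set1P ->; rewrite e_irr.
Qed.

Lemma independent_edgeF (I : {set V}) x y :
  independent I -> x \in I -> y \in I -> e x y = false.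
Proof.
by move=> /forallP/(_ x)/implyP Ix /Ix/forallP/(_ y)/implyP Iy /Iy/negbTE.
Qed.

Lemma exists_max_independent (A : {set V}) :
  exists2 C : {set V}, (C \subset A) && independent C &
    forall I : {set V}, I \subset A -> independent I -> #|I| <= #|C|.
Proof.
have set0_ok : (set0 \subset A) && independent set0.
  by rewrite sub0set; apply/forallP=> x; rewrite inE.
case: (@arg_maxnP _ set0 (fun I : {set V} => (I \subset A) && independent I)
  (fun I : {set V} => #|I|) set0_ok) => C C_ok C_max.
by exists C => // I IA Iind; apply: C_max; rewrite IA Iind.
Qed.

(* Achieved by giving color 0 to a maximum independent subset of [A] and
   coloring the rest of [A] recursively with colors 1, 2, ... *)
Definition greedy_coloring (A : {set V}) (c : V -> nat) :=
  {in A &, forall x y, e x y -> c x <> c y} /\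
  forall t (I : {set V}), I \subset A -> independent I ->
    {in I, forall v, t <= c v} -> #|I| <= #|[set v in A | c v == t]|.

Lemma greedy_coloring_exists (A : {set V}) : exists c, greedy_coloring A c.
Proof.
have [n] := ubnP #|A|; elim: n A => // n IH A ltAn.
have [-> | [a aA]] := set_0Vmem A.
  exists (fun => 0); split=> [x y|t I]; first by rewrite inE.
  by rewrite subset0 => /eqP ->; rewrite cards0.
have [C /andP[CA Cind] C_max] := exists_max_independent A.
have C_gt0 : 0 < #|C|.
  by rewrite -(cards1 a) C_max ?sub1set ?independent1.
have [|c' [c'_proper c'_classes]] := IH (A :\: C).
  by rewrite cardsDS //; have := subset_leq_card CA; lia.
exists (fun v => if v \in C then 0 else (c' v).+1); split.
  move=> x y xA yA xy; case xC: (x \in C); case yC: (y \in C) => //.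
  - by move: xy; rewrite (independent_edgeF Cind xC yC).
  - by case=> /c'_proper; apply; rewrite // !inE ?xC ?yC.
case=> [|t] I IA Iind I_ge.
  apply: leq_trans (C_max I IA Iind) (subset_leq_card _).
  by apply/subsetP=> v vC; rewrite inE vC (subsetP CA).
have I_C : {in I, forall v, v \notin C}.
  by move=> v /I_ge; case: (v \in C).
have IAC : I \subset A :\: C.
  by apply/subsetP=> v vI; rewrite inE I_C // (subsetP IA).
apply: leq_trans (c'_classes t I IAC Iind _) (subset_leq_card _).
  by move=> v vI; have := I_ge v vI; rewrite (negbTE (I_C v vI)).
apply/subsetP=> v; rewrite !inE.
by case/andP=> /andP[/negbTE -> ->] /eqP <-; rewrite eqxx.
Qed.

End GreedyColoring.

(* For i < j one of [m i <= m j], [m j <= m i] holds, so the pair {i, j}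
   contributes at least y j = y (max i j) to the symmetrized double sum. *)
Lemma weighted_rank_sum_le (s : nat) (y m : 'I_s -> nat) :
  (forall i j : 'I_s, i <= j -> y j <= y i) ->
  \sum_(i < s) i.+1 * y i <= \sum_(j < s) \sum_(i < s) y i * (m i <= m j).
Proof.
move=> y_dec.
have symmetrize (F : 'I_s -> 'I_s -> nat) :
    \sum_(j < s) \sum_(i < s) (F i j + F j i) = 2 * \sum_(j < s) \sum_(i < s) F i j.
  rewrite mul2n -addnn -[X in _ + X]exchange_big -big_split /=.
  by apply: eq_bigr => j _; rewrite big_split.
have -> : \sum_(i < s) i.+1 * y i = \sum_(j < s) \sum_(i < s) y j * (i <= j).
  by apply: eq_bigr => j _; rewrite -big_distrr /= sum_ord_leq mulnC.
rewrite -(leq_pmul2l (isT : 0 < 2)) -!symmetrize.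
apply: leq_sum => j _; apply: leq_sum => i _.
case: (ltngtP i j) => [ij | ji | /val_inj ->]; last by rewrite !leqnn.
- rewrite muln1 muln0 addn0.
  case: (leqP (m i) (m j)) => [_ | /ltnW ->]; last by rewrite muln0 muln1.
  by rewrite muln1 (leq_trans (y_dec _ _ (ltnW ij))) ?leq_addr.
- rewrite muln0 muln1 add0n.
  case: (leqP (m i) (m j)) => [_ | /ltnW ->]; first by rewrite muln1 leq_addr.
  by rewrite muln0 muln1 y_dec // ltnW.
Qed.

Lemma sum_card_color_classes_le (V W : finType) (c : V -> nat) (g : W -> nat) :
  injective g -> \sum_(w : W) #|[set v | c v == g w]| <= #|V|.
Proof.
move=> g_inj; under eq_bigr do rewrite card_set_sum.
rewrite exchange_big /= -sum1_card; apply: leq_sum => v _.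
case: (pickP (fun w => c v == g w)) => [w /eqP cv | no_w]; last first.
  by rewrite big1 // => w _; rewrite no_w.
rewrite (bigD1 w) //= cv eqxx big1 // => w' w'w.
by apply/eqP; rewrite eqb0 (inj_eq g_inj) eq_sym.
Qed.

Section RainbowCliquesLowerBound.

Variables (V : finType) (e : rel V) (s : nat) (y : 'I_s -> nat).
Hypothesis y_gt0 : forall i : 'I_s, 0 < y i.
Variables (c : V -> nat) (f : cliques_vertex s y -> V).
Hypothesis c_classes : forall t (I : {set V}), independent e I ->
  {in I, forall v, t <= c v} -> #|I| <= #|[set v | c v == t]|.
Hypothesis f_inj : injective f.
Hypothesis f_induced : forall u v, e (f u) (f v) = cliques_rel s y u v.

Let H := cliques_vertex s y.
Let g (w : H) := c (f w).
Let first_vertex (j : 'I_s) : H := Tagged (fun i => 'I_(y i)) (Ordinal (y_gt0 j)).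
Let top_vertex (j : 'I_s) := [arg max_(w > first_vertex j | tag w == j) g w].
Let top (j : 'I_s) := g (top_vertex j).

Lemma tag_top_vertex j : tag (top_vertex j) = j.
Proof. by rewrite /top_vertex; case: arg_maxnP => [|w /eqP]. Qed.

Lemma le_top w : g w <= top (tag w).
Proof. by rewrite /top /top_vertex; case: arg_maxnP => // w' _; apply. Qed.

Lemma card_tops_above w :
  #|[set j : 'I_s | g w <= top j]| <= #|[set v | c v == g w]|.
Proof.
have tf_inj : injective (fun j => f (top_vertex j)).
  by move=> j1 j2 /f_inj eq12; rewrite -(tag_top_vertex j1) eq12 tag_top_vertex.
rewrite -(card_imset _ tf_inj); apply: c_classes.
  apply/forallP=> x; apply/implyP=> /imsetP[j1 _ ->].
  apply/forallP=> z; apply/implyP=> /imsetP[j2 _ ->].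
  rewrite f_induced /cliques_rel !tag_top_vertex.
  by case: (eqVneq j1 j2) => [->|]; rewrite ?eqxx.
by move=> _ /imsetP[j jJ ->]; rewrite inE in jJ.
Qed.

Lemma weighted_rank_sum_le_tops :
  (forall i j : 'I_s, i <= j -> y j <= y i) ->
  \sum_(i < s) i.+1 * y i <= \sum_(w : H) #|[set j : 'I_s | g w <= top j]|.
Proof.
move=> y_dec; apply: leq_trans (weighted_rank_sum_le top y_dec) _.
under [X in X <= _]eq_bigr => j _ do
  rewrite -(sum_cliques_vertex_tag y (fun i => (top i <= top j : nat))).
rewrite exchange_big /=; apply: leq_sum => w _; rewrite card_set_sum.
apply: leq_sum => j _; case top_le: (top (tag w) <= top j) => //.
by rewrite (leq_trans (le_top w) top_le).
Qed.

End RainbowCliquesLowerBound.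

Lemma rainbow_cliques_card_ge (V : finType) (e : rel V) (s : nat) (y : 'I_s -> nat) :
  irreflexive e ->
  (forall i j : 'I_s, i <= j -> y j <= y i) ->
  (forall i : 'I_s, 0 < y i) ->
  rainbow_forcing (cliques_rel s y) e ->
  \sum_(i < s) i.+1 * y i <= #|V|.
Proof.
move=> e_irr y_dec y_gt0 forcing.
have [c [c_proper c_classes]] := greedy_coloring_exists e_irr [set: V].
have [|f [[f_inj f_induced] cf_inj]] := forcing c.
  by move=> x z; apply: c_proper; rewrite inE.
have c_classesT t I : independent e I -> {in I, forall v, t <= c v} ->
    #|I| <= #|[set v | c v == t]|.
  have -> : [set v | c v == t] = [set v in [set: V] | c v == t].
    by apply/setP=> v; rewrite !inE.
  exact/c_classes/subsetT.
apply: leq_trans (weighted_rank_sum_le_tops y_gt0 c f y_dec) _.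
apply: leq_trans (sum_card_color_classes_le c cf_inj).
by apply: leq_sum => w _; apply: (card_tops_above y_gt0 c_classesT f_inj f_induced).
Qed.

Lemma exists_subset_avoiding_colors (T : finType) (c : T -> nat) (K U : {set T}) n :
  {in K &, injective c} -> #|U| + n <= #|K| ->
  exists2 S : {set T}, S \subset K & #|S| = n /\ {in S & U, forall u v, c u != c v}.
Proof.
move=> c_inj UnK.
pose D := [set v in K | [exists u in U, c u == c v]].
have DK : D \subset K by apply/subsetP=> v; rewrite inE => /andP[].
have card_D : #|D| <= #|U|.
  pose partner v := odflt v [pick u in U | c u == c v].
  have partnerP v : v \in D -> partner v \in U /\ c (partner v) = c v.
    rewrite inE => /andP[_ /existsP[u /andP[uU /eqP cuv]]].
    rewrite /partner; case: pickP => [u' /andP[u'U /eqP] // | no_u].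
    by move: (no_u u); rewrite uU cuv eqxx.
  rewrite -(@card_in_imset _ _ partner); last first.
    move=> u v uD vD /(congr1 c); rewrite (partnerP u uD).2 (partnerP v vD).2.
    by apply: c_inj; apply: (subsetP DK).
  apply: subset_leq_card; apply/subsetP=> _ /imsetP[v vD ->].
  by case: (partnerP v vD).
have : n <= #|K :\: D| by rewrite cardsDS //; lia.
case/card_geqP=> l [l_uniq l_size lKD].
exists [set x in l]; first by apply/subsetP=> x /[!inE] /lKD /setDP[].
split; first by rewrite cardsE (card_uniqP l_uniq).
move=> u v /[!inE] /lKD /setDP[uK uD] vU; apply: contraNneq uD => cuv.
by rewrite inE uK; apply/existsP; exists v; rewrite vU cuv eqxx.
Qed.

Section RainbowCliquesUpperBound.

Variables (s : nat) (y : 'I_s -> nat).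

Definition suffix_sum (j : 'I_s) := \sum_(i < s | j <= i) y i.

Lemma suffix_sumE j : suffix_sum j = y j + \sum_(i < s | j < i) y i.
Proof.
rewrite /suffix_sum (bigD1 j) //=; congr (_ + _); apply: eq_bigl => i.
by rewrite ltn_neqAle andbC eq_sym.
Qed.

Lemma card_cliques_suffix_sum :
  #|cliques_vertex s suffix_sum| = \sum_(i < s) i.+1 * y i.
Proof.
rewrite card_cliques_vertex /suffix_sum.
under eq_bigr do rewrite big_mkcond /=.
rewrite exchange_big /=; apply: eq_bigr => i _.
rewrite mulnC -sum_ord_leq big_distrr /=; apply: eq_bigr => j _.
by case: (j <= i); rewrite ?muln1 ?muln0.
Qed.

Let G := cliques_vertex s suffix_sum.
Variable c : G -> nat.
Hypothesis c_proper : proper_coloring (cliques_rel s suffix_sum) c.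
Let clique (j : 'I_s) := [set v : G | tag v == j].

Lemma card_clique j : #|clique j| = suffix_sum j.
Proof.
rewrite card_set_sum (sum_cliques_vertex_tag _ (fun i => (i == j : nat))).
by rewrite (bigD1 j) //= eqxx muln1 big1 ?addn0 // => i /negbTE ->; rewrite muln0.
Qed.

Lemma clique_colors_inj j : {in clique j &, injective c}.
Proof.
move=> u v /[!inE] /eqP uj /eqP vj cuv; apply/eqP; apply: contraT => uv.
by have := c_proper (x := u) (y := v); rewrite /cliques_rel uj vj eqxx uv => /(_ isT).
Qed.

Definition rainbow_from (k : nat) (S : 'I_s -> {set G}) :=
  (forall j : 'I_s, k <= j -> S j \subset clique j /\ #|S j| = y j) /\
  (forall i j : 'I_s, k <= i -> i < j -> {in S i & S j, forall u v, c u != c v}).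

Lemma rainbow_from_step k S :
  k < s -> rainbow_from k.+1 S -> exists S', rainbow_from k S'.
Proof.
move=> ks [S_ok S_rainbow]; pose j0 := Ordinal ks.
pose U := \bigcup_(j : 'I_s | j0 < j) S j.
have card_U : #|U| <= \sum_(j < s | j0 < j) y j.
  apply: (big_ind2 (fun (X : {set G}) n => #|X| <= n))
    => [|X1 n1 X2 n2 le1 le2|j j0j].
  - by rewrite cards0.
  - exact: leq_trans (leq_card_setU _ _) (leq_add le1 le2).
  - by rewrite (S_ok j j0j).2.
have [|T Tj0 [card_T T_avoid]] :=
  @exists_subset_avoiding_colors _ c _ U (y j0) (@clique_colors_inj j0).
  by rewrite card_clique suffix_sumE addnC leq_add2l.
exists (fun j => if j == j0 then T else S j); split.
  move=> j; case: eqVneq => [-> // | ne kj]; apply: S_ok.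
  by move: ne; rewrite -val_eqE /=; lia.
move=> i j ki ij u v; have j0j : j0 < j by apply: leq_trans ij.
have -> : (j == j0) = false by rewrite -val_eqE gtn_eqF.
case: eqVneq => [_ uT vS | ne]; last first.
  move=> uS vS; apply: (S_rainbow i j _ ij u v uS vS).
  by move: ne; rewrite -val_eqE /=; lia.
by apply: T_avoid uT _; apply: (subsetP (bigcup_sup j j0j)).
Qed.

Lemma exists_rainbow_from0 : exists S, rainbow_from 0 S.
Proof.
suff /(_ s) : forall n, exists S, rainbow_from (s - n) S by rewrite subnn.
elim=> [|n [S S_ok]].
  by exists (fun => set0); rewrite subn0; split=> [j | i j]; rewrite leqNgt ltn_ord.
have [ns | sn] := ltnP n s; last by exists S; rewrite (_ : s - n.+1 = s - n) //; lia.
by apply: (rainbow_from_step (S := S)); rewrite ?subnSK //; lia.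
Qed.

Lemma rainbow_from0_embedding S : rainbow_from 0 S ->
  exists f : cliques_vertex s y -> G,
    induced_embedding (cliques_rel s y) (cliques_rel s suffix_sum) f /\
    injective (fun w => c (f w)).
Proof.
move=> [S_ok S_rainbow].
have S_card j : #|S j| = y j := (S_ok j (leq0n j)).2.
pose f (w : cliques_vertex s y) :=
  enum_val (cast_ord (esym (S_card (tag w))) (tagged w)).
have f_in w : f w \in S (tag w) by apply: enum_valP.
have tag_f w : tag (f w) = tag w.
  by apply/eqP; have := subsetP (S_ok _ (leq0n _)).1 _ (f_in w); rewrite inE.
have f_inj : injective f.
  move=> [i a] [j b] fab; have ij : i = j by move: (congr1 tag fab); rewrite !tag_f.
  by case: j / ij b fab => b /enum_val_inj/cast_ord_inj /= ->.
exists f; split.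
  by split=> // u v; rewrite /cliques_rel !tag_f (inj_eq f_inj).
move=> u v cuv; apply: f_inj.
case: (ltngtP (tag u) (tag v)) => [uv | vu | /val_inj uv].
- by move: (S_rainbow _ _ (leq0n _) uv _ _ (f_in u) (f_in v)); rewrite cuv eqxx.
- by move: (S_rainbow _ _ (leq0n _) vu _ _ (f_in v) (f_in u)); rewrite cuv eqxx.
- by apply: (@clique_colors_inj (tag v)); rewrite // inE tag_f ?uv.
Qed.

End RainbowCliquesUpperBound.

Lemma cliques_suffix_sum_rainbow_forcing (s : nat) (y : 'I_s -> nat) :
  rainbow_forcing (cliques_rel s y) (cliques_rel s (suffix_sum y)).
Proof.
move=> c c_proper; have [S S_ok] := exists_rainbow_from0 c_proper.
exact: rainbow_from0_embedding S_ok.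
Qed.

Theorem corollary3p2 (s : nat) (y : 'I_s -> nat) :
  (forall i j : 'I_s, i <= j -> y j <= y i) ->
  (forall i : 'I_s, 0 < y i) ->
  is_rho (cliques_rel s y) (\sum_(i < s) i.+1 * y i).
Proof.
move=> y_dec y_gt0; split.
  rewrite -card_cliques_suffix_sum; apply: rho_admissible_card.
    exact: cliques_rel_simple.
  exact: cliques_suffix_sum_rainbow_forcing.
move=> k [eG [[_ eG_irr] forcing]].
by rewrite -(card_ord k); apply: rainbow_cliques_card_ge forcing.
Qed.
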